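(* Let $X,Y$ be strings of length $n$, let $T$ be a partition tree for $X$ and $Y$, and let $L\ge0$ be an integer. Suppose that $T$ has maximum degree $\ell$ and height at most $h$. Then (a) $\mathrm{TD}^L(X,Y)\ge\mathrm{ED}(X,Y)$, and (b) if $\mathrm{ED}(X,Y)\le L$, then $\mathrm{TD}^L(X,Y)\le(2(\ell-1)h+1)\,\mathrm{ED}(X,Y)$.
   Context: $\mathrm{ED}$ is edit distance. For a string $Z$ and integers $i,j$, $Z[i..j)$ denotes $Z[\max(0,i)]\cdots Z[\min(j,|Z|)-1]$ (indices out of range are clipped). A partition tree for length-$n$ strings $X,Y$ is a rooted ordered tree (balanced, each internal node having at most $\ell$ children) with $n$ leaves numbered $0,\dots,n-1$ from left to right; the height is the maximum distance from the root to a leaf. For a node $v$ whose subtree contains exactly the leaves $i,\dots,j-1$, set $X_v=X[i..j)$ and, for a shift $s\in\mathbb Z$, $Y_{v,s}=Y[i+s..j+s)$. For every node $v$ and $s\in\{-L,\dots,L\}$ define recursively: if $v$ is a leaf, $\mathrm{TD}^L_{v,s}(X,Y)=\mathrm{ED}(X_v,Y_{v,s})$; if $v$ has children $v_0,\dots,v_{m-1}$, then $\mathrm{TD}^L_{v,s}(X,Y)=\sum_{i=0}^{m-1}\widetilde{\mathrm{TD}}^L_{v_i,s}(X,Y)$, where $\widetilde{\mathrm{TD}}^L_{w,s}(X,Y)=\min_{s'\in\{-L,\dots,L\}}\big(\mathrm{TD}^L_{w,s'}(X,Y)+2|s-s'|\big)$. Finally $\mathrm{TD}^L(X,Y):=\mathrm{TD}^L_{\mathrm{root},0}(X,Y)$.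 *)

From mathcomp Require Import all_boot all_order all_algebra.
Set Implicit Arguments. Unset Strict Implicit. Unset Printing Implicit Defensive.
Import Order.TTheory GRing.Theory Num.Theory.

Section ED.
Variable A : eqType.

Fixpoint ed (X Y : seq A) {struct X} : nat :=
  match X with
  | [::] => size Y
  | x :: X' =>
      let fix edx (Y : seq A) : nat :=
        match Y with
        | [::] => (size X').+1
        | y :: Y' => minn (minn (ed X' Y).+1 (edx Y').+1) (ed X' Y' + (x != y))
        end in
      edx Y
  end.

(* Z[a..b) with clipping: Z[max(0,a)] ... Z[min(b,|Z|)-1]. *)
Definition sub (Z : seq A) (a b : int) : seq A :=
  drop `|Num.max 0%R a|%N (take `|Num.max 0%R b|%N Z).
End ED.

(* ---------- Rooted ordered trees; leaves are numbered left to right. *)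
Inductive ptree := PLeaf | PNode of seq ptree.

Fixpoint nleaves (t : ptree) : nat :=
  match t with PLeaf => 1 | PNode ts => sumn (map nleaves ts) end.

Fixpoint height (t : ptree) : nat :=
  match t with PLeaf => 0 | PNode ts => (foldr maxn 0 (map height ts)).+1 end.

Fixpoint maxdeg (t : ptree) : nat :=
  match t with PLeaf => 0 | PNode ts => maxn (size ts) (foldr maxn 0 (map maxdeg ts)) end.

(* well-formed: every internal node has at least one child
   (a childless node is a leaf, represented by PLeaf) *)
Fixpoint ptree_wf (t : ptree) : bool :=
  match t with PLeaf => true | PNode ts => (size ts != 0) && all ptree_wf ts end.

Definition partition_tree (n : nat) (t : ptree) : bool :=
  ptree_wf t && (nleaves t == n).

(* minimum of a nonempty list of naturals (0 on the empty list, never used) *)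
Definition minl (l : seq nat) : nat :=
  match l with [::] => 0 | x :: l' => foldr minn x l' end.

Definition srange (L : nat) : seq int := [seq (k%:Z - L%:Z)%R | k <- iota 0 (L.*2.+1)].

Section TD.
Variables (A : eqType) (L : nat) (X Y : seq A).

(* TD t i s = TD^L_{v,s}(X,Y) for the node v whose subtree is t and whose
   leftmost leaf has number i (so its leaves are i, ..., i + nleaves t - 1). *)
Fixpoint TDnode (t : ptree) (i : nat) (s : int) {struct t} : nat :=
  match t with
  | PLeaf => ed (sub X i (i + 1)%N) (sub Y (i%:Z + s)%R ((i + 1)%N%:Z + s)%R)
  | PNode ts =>
      let fix go (cs : seq ptree) (j : nat) : nat :=
        match cs with
        | [::] => 0
        | c :: cs' =>
            minl [seq TDnode c j s' + 2 * `|(s - s')%R|%N | s' <- srange L]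
            + go cs' (j + nleaves c)
        end in
      go ts i
  end.

Definition TDtilde (t : ptree) (i : nat) (s : int) : nat :=
  minl [seq TDnode t i s' + 2 * `|(s - s')%R|%N | s' <- srange L].

Definition TD (T : ptree) : nat := TDnode T 0 0.
End TD.

(* Part (a): edit distance is subadditive under concatenation, and moving a
   window of Y by one position changes its edit distance to a fixed string by
   at most 2, so the penalty 2|s - s'| always pays for a change of shift;
   induction on the tree gives TD >= ED.
   Part (b): an optimal alignment cuts Y into blocks P_k, one per character
   X[k], with sum_k ED(X[k], P_k) <= ED(X, Y).  Evaluate each node at the
   shift that lines its leftmost leaf up with the start of its block.  The
   shifts of leaves i <= j differ by at most the alignment cost between them,
   so they lie in [-L, L] when ED(X, Y) <= L, and a child switching from its
   parent's shift to its own pays at most twice the cost of the parent's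
   subtree.  At most l - 1 children (those after the first) switch, so each
   level of the tree adds 2(l - 1) ED(X, Y) on top of the ED(X, Y) paid at
   the leaves. *)
From mathcomp Require Import all_boot all_order all_algebra.
From mathcomp Require Import zify.
Import Order.TTheory GRing.Theory Num.Theory.
Set Implicit Arguments. Unset Strict Implicit. Unset Printing Implicit Defensive.

Section EditDistance.
Variable A : eqType.
Implicit Types (x y : A) (X Y Z : seq A).

Lemma eds0 X : ed X [::] = size X.
Proof. by case: X. Qed.

Lemma ed_cons x X y Y : ed (x :: X) (y :: Y) =
  minn (minn (ed X (y :: Y)).+1 (ed (x :: X) Y).+1) (ed X Y + (x != y)).
Proof. by []. Qed.

Lemma ed1 x y : ed [:: x] [:: y] = (x != y).
Proof. by rewrite ed_cons /=; case: (x != y). Qed.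

Lemma ed_consl x X Z : ed (x :: X) Z <= (ed X Z).+1.
Proof. by elim: Z => [|z Z IH]; rewrite ?eds0 // ed_cons; lia. Qed.

Lemma ed_consr X y Z : ed X (y :: Z) <= (ed X Z).+1.
Proof. by case: X => [|x X] //; rewrite ed_cons; lia. Qed.

Lemma ed_consr_ge X y Z : ed X Z <= (ed X (y :: Z)).+1.
Proof.
elim: X Z => [|x X IH] Z; first by rewrite /=; lia.
by rewrite ed_cons; have := ed_consl x X Z; have := IH Z; lia.
Qed.

Lemma ed_size X Y : `|size X - size Y| <= ed X Y.
Proof.
elim: X Y => [|x X IH] Y; first by rewrite /=; lia.
elim: Y => [|y Y IHY]; first by rewrite eds0 /=; lia.
by rewrite ed_cons; move: IHY (IH Y) (IH (y :: Y)) => /=; lia.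
Qed.

Lemma ed_cat X1 X2 Y1 Y2 : ed (X1 ++ X2) (Y1 ++ Y2) <= ed X1 Y1 + ed X2 Y2.
Proof.
have ed_catl X Y Y' : ed X (Y ++ Y') <= size Y + ed X Y'.
  elim: Y => [|y Y IH] //; rewrite cat_cons [size _]/=.
  by have := ed_consr X y (Y ++ Y'); lia.
have ed_catr X X' Y : ed (X ++ X') Y <= size X + ed X' Y.
  elim: X => [|x X IH] //; rewrite cat_cons [size _]/=.
  by have := ed_consl x (X ++ X') Y; lia.
elim: X1 Y1 => [|x X1 IH] Y1; first exact: ed_catl.
elim: Y1 => [|y Y1 IHY]; first by rewrite eds0; exact: ed_catr.
by rewrite !cat_cons !ed_cons; move: IHY (IH Y1) (IH (y :: Y1)); rewrite !cat_cons; lia.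
Qed.

Lemma ed_rcons X Z y : ed X (rcons Z y) <= (ed X Z).+1.
Proof. by have := ed_cat X [::] Z [:: y]; rewrite cats0 cats1 /=; lia. Qed.

Lemma ed_rcons_ge X Z y : ed X Z <= (ed X (rcons Z y)).+1.
Proof.
elim: X Z => [|x X IH] Z; first by rewrite /= size_rcons; lia.
elim: Z => [|z Z IHZ].
  by rewrite eds0 /=; have := ed_size (x :: X) [:: y]; rewrite /=; lia.
by rewrite rcons_cons !ed_cons; move: IHZ (IH Z) (IH (z :: Z)) => /=; lia.
Qed.

Lemma ed1_take1_cat x p r : ed [:: x] (take 1 (p ++ r)) <= ed [:: x] p.
Proof.
case: p => [|y p]; last by rewrite cat_cons take_cons take0 ed1 ed_cons /=; lia.
by case: r => [|z r] //; rewrite take_cons take0 ed1; case: (x != z).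
Qed.

End EditDistance.

Lemma dist_lipschitz (f : nat -> nat) :
  (forall k, `|f k.+1 - f k| <= 1) -> forall a b, `|f a - f b| <= `|a - b|.
Proof.
move=> step; suff up a k : `|f (a + k) - f a| <= k.
  by move=> a b; case: (leqP a b) => [/subnKC <-|/ltnW/subnKC <-];
    [have := up a (b - a) | have := up b (a - b)]; lia.
by elim: k => [|k IH]; rewrite ?addn0 ?subrr // addnS; have := step (a + k); lia.
Qed.

Section Slices.
Variable A : eqType.
Implicit Types (X Y : seq A).

Definition slice Y a b := drop a (take b Y).

Lemma sub_slice Y l r : sub Y l r = slice Y `|Num.max 0%R l| `|Num.max 0%R r|.
Proof. by []. Qed.

Lemma slice_cat Y a b c : a <= b -> b <= c -> slice Y a b ++ slice Y b c = slice Y a c.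
Proof.
have slice_take a' b' : a' <= b' -> slice Y a' b' = take (b' - a') (drop a' Y).
  by move=> le_ab; rewrite take_drop subnK.
move=> le_ab le_bc; rewrite !slice_take ?(leq_trans le_ab) //.
by rewrite (_ : c - a = (b - a) + (c - b)) 1?takeD ?drop_drop ?subnK //; lia.
Qed.

Lemma sub_cat Y l m r : (l <= m)%R -> (m <= r)%R -> sub Y l m ++ sub Y m r = sub Y l r.
Proof. by move=> le_lm le_mr; rewrite !sub_slice slice_cat //; lia. Qed.

Lemma sub_full Y : sub Y 0 (size Y) = Y.
Proof.
rewrite sub_slice.
have -> : `|Num.max 0%R (Posz (size Y))|%N = size Y by lia.
by rewrite /slice drop0 take_size.
Qed.

Lemma sub_empty Y l : sub Y l l = [::].
Proof. by rewrite sub_slice /slice drop_oversize // size_take_min; lia. Qed.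

Lemma slice_succr Y a b :
  exists2 v : seq A, size v <= 1 & slice Y a b.+1 = slice Y a b ++ v.
Proof.
rewrite /slice -[b.+1]addn1 takeD drop_cat; case: ifP => [_|/negbT].
  by exists (take 1 (drop b Y)); rewrite // size_take_min geq_minl.
rewrite -leqNgt => /drop_oversize ->.
by exists (drop (a - size (take b Y)) (take 1 (drop b Y))); rewrite // size_drop size_take_min; lia.
Qed.

Lemma ed_slice_succl X Y a b : `|ed X (slice Y a.+1 b) - ed X (slice Y a b)| <= 1.
Proof.
rewrite /slice -add1n -drop_drop drop1.
case: (drop a _) => [|y u] /=; first by rewrite subrr.
by have := ed_consr X y u; have := ed_consr_ge X y u; lia.
Qed.

Lemma ed_slice_succr X Y a b : `|ed X (slice Y a b.+1) - ed X (slice Y a b)| <= 1.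
Proof.
have [[|y [|//]] _ ->] := slice_succr Y a b; first by rewrite cats0 subrr.
rewrite cats1; have := ed_rcons X (slice Y a b) y.
by have := ed_rcons_ge X (slice Y a b) y; lia.
Qed.

Lemma ed_slice X Y a b a' b' :
  `|ed X (slice Y a b) - ed X (slice Y a' b')| <= `|a - a'| + `|b - b'|.
Proof.
have := dist_lipschitz (fun a => ed_slice_succl X Y a b) a a'.
have := dist_lipschitz (fun b => ed_slice_succr X Y a' b) b b'.
lia.
Qed.

Lemma ed_sub_shift X Y l r s s' :
  ed X (sub Y (l + s) (r + s)) <= ed X (sub Y (l + s') (r + s')) + 2 * `|(s - s')%R|%N.
Proof.
rewrite !sub_slice.
have := ed_slice X Y `|Num.max 0%R (l + s)%R| `|Num.max 0%R (r + s)%R|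
  `|Num.max 0%R (l + s')%R| `|Num.max 0%R (r + s')%R|.
lia.
Qed.

End Slices.

Lemma minl_le (s : seq nat) x : x \in s -> minl s <= x.
Proof.
case: s => [//|y s] /=; elim: s x => [|z s IH] x /=; first by rewrite inE => /eqP ->.
rewrite !inE geq_min => /or3P[/eqP->|/eqP->|x_s]; rewrite ?leqnn ?orbT //.
  by rewrite IH ?mem_head ?orbT.
by rewrite IH ?inE ?x_s ?orbT.
Qed.

Lemma minl_mem (s : seq nat) : s != [::] -> minl s \in s.
Proof.
case: s => [//|y s] _ /=; elim: s => [|z s IH] /=; first by rewrite inE.
rewrite /minn; case: ifP => _; first by rewrite !inE eqxx orbT.
by rewrite !inE in IH *; case/orP: IH => ->; rewrite ?orbT.
Qed.

Lemma srange_mem L (d : int) : `|d| <= L -> d \in srange L.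
Proof. by move=> le_dL; apply/mapP; exists `|(d + L%:Z)%R|; rewrite ?mem_iota; lia. Qed.

Lemma nleaves_cons c cs : nleaves (PNode (c :: cs)) = nleaves c + nleaves (PNode cs).
Proof. by []. Qed.

Lemma height_cons_le c cs h :
  (height (PNode (c :: cs)) <= h.+1) = (height c <= h) && (height (PNode cs) <= h.+1).
Proof. by rewrite /= !ltnS geq_max. Qed.

Lemma maxdeg_cons_le c cs K : maxdeg (PNode (c :: cs)) <= K ->
  [/\ size cs < K, maxdeg c <= K & maxdeg (PNode cs) <= K].
Proof. by rewrite /= !geq_max => /andP[lt_cs /andP[-> ->]]; rewrite lt_cs ltnW. Qed.

Lemma nleaves_gt0 t : ptree_wf t -> 0 < nleaves t.
Proof.
move: {2}(height t) (leqnn (height t)) => h.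
elim: h t => [|h IH] [|[|c cs]] //=; rewrite ltnS geq_max => /andP[hc _] /andP[wf_c _].
by rewrite addn_gt0 IH.
Qed.

Section TreeDistance.
Variables (A : eqType) (L : nat) (X Y : seq A).

Lemma TDnode_leaf (i : nat) s : TDnode L X Y PLeaf i s =
  ed (sub X i (i + 1)%N) (sub Y (i%:Z + s)%R ((i + 1)%N%:Z + s)%R).
Proof. by []. Qed.

Lemma TDnode_nil i s : TDnode L X Y (PNode [::]) i s = 0.
Proof. by []. Qed.

Lemma TDnode_cons c cs i s : TDnode L X Y (PNode (c :: cs)) i s =
  TDtilde L X Y c i s + TDnode L X Y (PNode cs) (i + nleaves c) s.
Proof. by []. Qed.

Lemma TDtilde_le c i s s' : s' \in srange L ->
  TDtilde L X Y c i s <= TDnode L X Y c i s' + 2 * `|(s - s')%R|%N.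
Proof. by move=> s'_range; apply/minl_le/(map_f (fun s' => _ + 2 * `|(s - s')%R|%N)). Qed.

Lemma TDtilde_attained c i s : exists2 s', s' \in srange L &
  TDtilde L X Y c i s = TDnode L X Y c i s' + 2 * `|(s - s')%R|%N.
Proof. by apply/mapP/minl_mem. Qed.

Lemma ed_le_TDnode h t (i : nat) (s : int) : height t <= h ->
  ed (sub X i (i + nleaves t)%N) (sub Y (i%:Z + s)%R ((i + nleaves t)%N%:Z + s)%R)
  <= TDnode L X Y t i s.
Proof.
elim: h t i s => [|h IH] [|ts] i s //.
elim: ts i => [|c cs IHcs] i; first by rewrite addn0 !sub_empty.
rewrite height_cons_le => /andP[hc hcs].
rewrite TDnode_cons nleaves_cons addnA.
rewrite -(@sub_cat _ X i (i + nleaves c)%N); try lia.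
rewrite -(@sub_cat _ Y _ ((i + nleaves c)%N%:Z + s)%R); try lia.
apply: leq_trans (ed_cat _ _ _ _) (leq_add _ (IHcs _ hcs)).
have [s' _ ->] := TDtilde_attained c i s.
by apply: leq_trans (ed_sub_shift _ _ _ _ _ s') _; rewrite leq_add2r; exact: IH.
Qed.

End TreeDistance.

Section Alignment.
Variable A : eqType.
Implicit Types (x y : A) (X Y : seq A) (P : seq (seq A)).

Definition alignment X Y P := size P = size X /\ flatten P = Y.

Definition block_ed X P k := ed (slice X k k.+1) (nth [::] P k).

Definition align_cost X P := \sum_(0 <= k < size X) block_ed X P k.

Lemma align_cost_cons x X p P :
  align_cost (x :: X) (p :: P) = ed [:: x] p + align_cost X P.
Proof. by rewrite /align_cost big_nat_recl // /block_ed /slice drop0 take_cons take0. Qed.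

Lemma align_cost_nil x X : align_cost (x :: X) (nseq (size X).+1 [::]) = (size X).+1.
Proof.
rewrite /align_cost (eq_big_nat _ _ (F2 := fun=> 1)) ?sum_nat_const_nat ?muln1 ?subn0 //.
by move=> k /andP[_ lt_k]; rewrite /block_ed nth_nseq if_same eds0 size_drop size_take_min; lia.
Qed.

Lemma ed_alignment X Y : X != [::] ->
  exists2 P, alignment X Y P & align_cost X P <= ed X Y.
Proof.
case: X => [//|x X] _; elim: X x Y => [|x' X IH] x Y.
  exists [:: Y]; first by split; rewrite /= ?cats0.
  by rewrite align_cost_cons /align_cost big_geq ?addn0.
elim: Y => [|y Y [[|p P] [size_P flat_P] cost_P]] //.
  exists (nseq (size X).+2 [::]); last by rewrite align_cost_nil eds0.
  by split; [rewrite size_nseq | elim: (size X).+2].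
have [P1 [size_P1 flat_P1] cost_P1] := IH x' (y :: Y).
have [P3 [size_P3 flat_P3] cost_P3] := IH x' Y.
rewrite ed_cons.
set a := (ed _ (y :: Y)).+1; set b := (ed _ Y).+1; set c := ed _ _ + _.
have cand_a : exists2 Q, alignment (x :: x' :: X) (y :: Y) Q &
    align_cost (x :: x' :: X) Q <= a.
  exists ([::] :: P1); first by split; rewrite /= ?size_P1 ?flat_P1.
  by rewrite align_cost_cons eds0.
have cand_b : exists2 Q, alignment (x :: x' :: X) (y :: Y) Q &
    align_cost (x :: x' :: X) Q <= b.
  exists ((y :: p) :: P); first by split; rewrite /= -?size_P -?flat_P.
  by move: cost_P; rewrite !align_cost_cons; have := ed_consr [:: x] y p; lia.
have cand_c : exists2 Q, alignment (x :: x' :: X) (y :: Y) Q &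
    align_cost (x :: x' :: X) Q <= c.
  exists ([:: y] :: P3); first by split; rewrite /= ?size_P3 ?flat_P3.
  by rewrite align_cost_cons ed1 addnC leq_add2r.
have : minn (minn a b) c = a \/ minn (minn a b) c = b \/ minn (minn a b) c = c by lia.
by case=> [->|[->|->]].
Qed.

End Alignment.

Section UpperBound.
Variables (A : eqType) (L : nat) (X Y : seq A) (P : seq (seq A)).
Hypothesis al_P : alignment X Y P.

Definition offset k := size (flatten (take k P)).
Definition shift k : int := ((offset k)%:Z - k%:Z)%R.
Definition cost i j := \sum_(i <= k < j) block_ed X P k.

Lemma cost_cat i j k : i <= j -> j <= k -> cost i j + cost j k = cost i k.
Proof. by move=> le_ij le_jk; rewrite /cost -big_cat_nat. Qed.

Lemma shift0 : shift 0 = 0%R.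
Proof. by rewrite /shift /offset take0. Qed.

Lemma shift_succ k : k < size X -> `|(shift k.+1 - shift k)%R| <= block_ed X P k.
Proof.
case: al_P => size_P _ lt_k.
have offset_succ : offset k.+1 = offset k + size (nth [::] P k).
  by rewrite /offset (take_nth [::]) ?size_P // flatten_rcons size_cat.
have := ed_size (slice X k k.+1) (nth [::] P k).
by rewrite /block_ed /shift offset_succ /slice size_drop size_take_min; lia.
Qed.

Lemma shift_dist i j : i <= j -> j <= size X -> `|(shift j - shift i)%R| <= cost i j.
Proof.
elim: j => [|j IH] le_ij le_j; first by rewrite leqn0 in le_ij; rewrite (eqP le_ij) subrr.
case: (ltnP j i) => [lt_ji|le_ij']; first by rewrite (_ : i = j.+1) ?subrr //; lia.
rewrite /cost big_nat_recr //= -/(cost i j).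
by have := IH le_ij' (ltnW le_j); have := shift_succ le_j; lia.
Qed.

Lemma TDleaf_shift_le k : k < size X -> TDnode L X Y PLeaf k (shift k) <= block_ed X P k.
Proof.
case: al_P => size_P flat_P lt_k; rewrite TDnode_leaf.
have -> : sub X k (k + 1)%N = slice X k k.+1 by rewrite sub_slice; congr slice; lia.
have -> : sub Y (k%:Z + shift k)%R ((k + 1)%N%:Z + shift k)%R = take 1 (drop (offset k) Y).
  by rewrite sub_slice /slice take_drop; congr (drop _ (take _ _)); rewrite /shift; lia.
have split_Y : Y = flatten (take k P) ++ nth [::] P k ++ flatten (drop k.+1 P).
  by rewrite -flat_P -{1}(cat_take_drop k P) flatten_cat (drop_nth [::]) ?size_P.
rewrite /block_ed split_Y /offset drop_size_cat //.
have : size (slice X k k.+1) = 1 by rewrite /slice size_drop size_take_min; lia.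
by case: (slice X k k.+1) => [|x []] // _; apply: ed1_take1_cat.
Qed.

Hypothesis cost_L : cost 0 (size X) <= L.

Lemma shift_srange j : j <= size X -> shift j \in srange L.
Proof.
move=> le_j; apply: srange_mem.
by have := shift_dist (leq0n j) le_j; have := cost_cat (leq0n j) le_j; rewrite shift0; lia.
Qed.

Lemma TDtilde_shift_le c i j : i <= j -> j <= size X ->
  TDtilde L X Y c j (shift i) <= TDnode L X Y c j (shift j) + 2 * cost i j.
Proof.
move=> le_ij le_j; apply: leq_trans (TDtilde_le _ _ _ _ _ (shift_srange le_j)) _.
by have := shift_dist le_ij le_j; lia.
Qed.

Section Children.
Variables (C h K : nat).
Hypothesis TD_child_le : forall t i, height t <= h -> maxdeg t <= K ->
  i + nleaves t <= size X -> TDnode L X Y t i (shift i) <= C * cost i (i + nleaves t).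

Lemma TDforest_le cs i j : i <= j -> height (PNode cs) <= h.+1 -> maxdeg (PNode cs) <= K ->
  j + nleaves (PNode cs) <= size X ->
  TDnode L X Y (PNode cs) j (shift i) <=
    C * cost j (j + nleaves (PNode cs)) + 2 * size cs * cost i (j + nleaves (PNode cs)).
Proof.
elim: cs j => [|c cs IH] j le_ij; first by rewrite TDnode_nil.
rewrite height_cons_le nleaves_cons => /andP[hc hcs] /maxdeg_cons_le[_ dc dcs] fits.
rewrite TDnode_cons [size _]/=.
have fits_c : j + nleaves c <= size X by rewrite (leq_trans _ fits) ?leq_add2l ?leq_addr.
have tilde_le := TDtilde_shift_le c le_ij (leq_trans (leq_addr _ _) fits_c).
have child_le := TD_child_le hc dc fits_c.
have := IH (j + nleaves c) (leq_trans le_ij (leq_addr _ _)) hcs dcs.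
rewrite -!addnA => /(_ fits) rest_le.
have cost_j := cost_cat (leq_addr (nleaves c) j) (leq_addr (nleaves (PNode cs)) _).
have cost_i := cost_cat le_ij (leq_addr (nleaves c + nleaves (PNode cs)) j).
rewrite -addnA in cost_j.
nia.
Qed.

End Children.

Lemma TDnode_shift_le K h t i : height t <= h -> maxdeg t <= K -> i + nleaves t <= size X ->
  TDnode L X Y t i (shift i) <= (2 * K.-1 * h + 1) * cost i (i + nleaves t).
Proof.
elim: h t i => [|h IH] [|[|c cs]] i //; try by move=> _ _; rewrite [nleaves _]/= addn1 => fits;
  rewrite /cost big_nat1 (leq_trans (TDleaf_shift_le fits)) // leq_pmull ?addn1.
rewrite height_cons_le nleaves_cons => /andP[hc hcs] /maxdeg_cons_le[lt_cs dc dcs] fits.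
rewrite TDnode_cons.
have fits_c : i + nleaves c <= size X by rewrite (leq_trans _ fits) ?leq_add2l ?leq_addr.
have := TDtilde_le X Y c i (shift i) (shift_srange (leq_trans (leq_addr _ _) fits_c)).
rewrite subrr muln0 addn0 => first_le.
have child_le := IH c i hc dc fits_c.
have := TDforest_le IH (leq_addr (nleaves c) i) hcs dcs.
rewrite -!addnA => /(_ fits) rest_le.
have cost_i := cost_cat (leq_addr (nleaves c) i) (leq_addr (nleaves (PNode cs)) _).
rewrite -addnA in cost_i.
nia.
Qed.

End UpperBound.

Theorem lemma4p3 (A : eqType) (X Y : seq A) (n : nat) (T : ptree) (L l h : nat) :
  size X = n -> size Y = n -> partition_tree n T ->
  maxdeg T = l -> height T <= h ->
  ed X Y <= TD L X Y T /\
  (ed X Y <= L -> TD L X Y T <= (2 * l.-1 * h + 1) * ed X Y).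
Proof.
move=> size_X size_Y /andP[wf_T /eqP leaves_T] deg_T height_T.
split.
  have := ed_le_TDnode L X Y 0 0 (leqnn (height T)).
  by rewrite add0n !addr0 leaves_T -{1}size_X -size_Y !sub_full.
move=> ed_L.
have X_nil : X != [::] by rewrite -size_eq0 size_X -leaves_T -lt0n nleaves_gt0.
have [P al_P cost_P] := ed_alignment Y X_nil.
have fits_T : 0 + nleaves T <= size X by rewrite add0n leaves_T size_X.
have := TDnode_shift_le al_P (leq_trans cost_P ed_L) height_T (eq_leq deg_T) fits_T.
rewrite /TD shift0 add0n leaves_T -size_X => TD_le.
by rewrite (leq_trans TD_le) // leq_mul2l cost_P orbT.
Qed.
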